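(* Let $p$ be an odd prime and $l_1,l_2\ge0$ integers, and put $d=l_1+l_2-\tfrac12$. There exists an integer $s_0\ge0$ such that for every integer $s\ge s_0$ and every integer $a$ with $\frac{p^s-1}2-l_1\ge l_2+a\ge0$, $$\left|\binom{-\frac12-l_1}{l_2+a}-\binom{\frac{p^s-1}2-l_1}{l_2+a}\right|_p\le p^{-(s-d-a)}.$$
   Context: $|\cdot|_p$ is the $p$-adic norm on $\mathbb Q_p$. For $y\in\mathbb Q_p$ and an integer $k\ge0$, $\binom{y}{k}=\frac{y(y-1)\cdots(y-k+1)}{k!}$; the numbers $\binom{-1/2-l_1}{k}$ lie in $\mathbb Z_p$. *)

From HB Require Import structures.
From mathcomp Require Import all_boot all_order all_algebra.
From mathcomp Require Import all_classical all_reals all_analysis.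
Set Implicit Arguments. Unset Strict Implicit. Unset Printing Implicit Defensive.
Import Order.TTheory GRing.Theory Num.Theory.
Local Open Scope ring_scope.

Definition binq (y : rat) (k : nat) : rat :=
  (\prod_(i < k) (y - i%:R)) / (k`!)%:R.

Definition padic_val (p : nat) (q : rat) : int :=
  (logn p `|numq q|%N)%:Z - (logn p `|denq q|%N)%:Z.

Definition padic_norm (R : realType) (p : nat) (q : rat) : R :=
  if q == 0 then 0 else (p%:R : R) ^ (- padic_val p q).

From HB Require Import structures.
From mathcomp Require Import all_boot all_order all_algebra.
From mathcomp Require Import all_classical all_reals all_analysis.
From mathcomp Require Import zify ring lra.
Import Order.TTheory GRing.Theory Num.Theory.

(* Put P = p^s.  For i : nat both upper arguments are half-integers:
     -1/2 - l1 - i = c_i / 2   and   (P - 1)/2 - l1 - i = (P + c_i) / 2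
   with c_i = -(2 l1 + 2 i + 1).  Hence, writing D = 2^k k!,
     binq (-1/2 - l1) k = (prod c_i) / D,
     binq ((P-1)/2 - l1) k = (prod (P + c_i)) / D,
   and since prod (P + c_i) = prod c_i modulo P, the difference of the two
   binomials is (P m) / D for some integer m.  For an odd prime p the factor
   2^k is a p-adic unit, so the valuation of the difference is at least
   s - v_p(k!), and Legendre's formula gives (p - 1) v_p(k!) <= k, hence
   v_p(k!) < k for k > 0.  This valuation bound s - k + 1 beats the required
   exponent s - d - a = s - l1 - k + 1/2. *)

(* Telescoping form of Legendre's sum: each term k / p^i loses a factor p. *)
Lemma legendre_telescope (p k n : nat) : (0 < p)%N ->
  ((p - 1) * \sum_(1 <= i < n.+1) k %/ p ^ i + k %/ p ^ n <= k)%N.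
Proof.
move=> p_gt0; elim: n => [|n IHn]; first by rewrite big_geq // expn0 divn1 muln0.
rewrite big_nat_recr //= expnSr divnMA.
have := leq_divM (k %/ p ^ n) p.
move: IHn; set S := \sum_(_ <= _ < _) _; set x := k %/ p ^ n; set y := x %/ p.
nia.
Qed.

Lemma logn_fact_bound (p k : nat) : prime p -> ((p - 1) * logn p k`! <= k)%N.
Proof.
move=> p_pr; rewrite logn_fact //.
by apply: leq_trans (leq_addr _ _) (legendre_telescope p k k (prime_gt0 p_pr)).
Qed.

Lemma logn_fact_lt (p k : nat) : prime p -> odd p -> (0 < k)%N ->
  (logn p k`! < k)%N.
Proof.
move=> p_pr p_odd k_gt0; have := logn_fact_bound p k p_pr.
have p_ge3 : (3 <= p)%N.
  by have := prime_gt1 p_pr; case: p p_odd {p_pr} => [|[|[|]]].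
nia.
Qed.

Local Open Scope ring_scope.

(* Valuation of a fraction n / d of integers: v_p(n) - v_p(d), whatever the
   common factors cancelled in the reduced form of the rational. *)
Lemma padic_val_frac (p : nat) (n : int) (d : nat) : n != 0 -> (0 < d)%N ->
  padic_val p (n%:~R / d%:R) = (logn p `|n|%N)%:Z - (logn p d)%:Z.
Proof.
move=> n_neq0 d_gt0; rewrite /padic_val; set q : rat := n%:~R / d%:R.
have d_neq0 : d%:R != 0 :> rat by rewrite pnatr_eq0 -lt0n.
have q_neq0 : q != 0 by rewrite mulf_neq0 ?invr_eq0 ?intr_eq0.
have cross : numq q * d%:Z = n * denq q.
  apply: (@intr_inj rat); rewrite !rmorphM /= numqE /q.
  by rewrite [(d%:Z)%:~R]/(d%:R) mulrAC divfK.
have abs_cross : (`|numq q| * d = `|n| * `|denq q|)%N.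
  by rewrite -[d]/(`|d%:Z|%N) -!abszM cross.
have := congr1 (logn p) abs_cross.
rewrite !lognM ?absz_gt0 ?numq_eq0 ?denq_eq0 //; lia.
Qed.

Lemma binq_half_int (y : rat) (f : nat -> int) (k : nat) :
  (forall i : nat, y - i%:R = (f i)%:~R / 2) ->
  binq y k = (\prod_(i < k) f i)%:~R / ((2 ^ k * k`!)%N)%:R.
Proof.
move=> yf; rewrite /binq (eq_bigr (fun i : 'I_k => (f i)%:~R * 2^-1)); last first.
  by move=> i _; rewrite yf.
by rewrite big_split /= prodr_const card_ord rmorph_prod natrM natrX invfM exprVn mulrA.
Qed.

Lemma prod_shift_mod (R : comPzRingType) (P : R) (f : nat -> R) (k : nat) :
  exists m : R, \prod_(i < k) (P + f i) = \prod_(i < k) f i + P * m.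
Proof.
elim: k => [|k [m IHk]]; first by exists 0; rewrite !big_ord0 mulr0 addr0.
exists (m * (P + f k) + \prod_(i < k) f i).
by rewrite !big_ord_recr /= IHk; ring.
Qed.

Lemma binq_half_shift (P l k : nat) : exists m : int,
  binq (- (1 / 2) - l%:R) k - binq ((P%:R - 1) / 2 - l%:R) k
  = (P%:Z * m)%:~R / ((2 ^ k * k`!)%N)%:R.
Proof.
pose c (i : nat) : int := - ((2 * l + 2 * i + 1)%N)%:Z.
have [m prod_shift] := prod_shift_mod _ P%:Z c k.
have binq_lo : binq (- (1 / 2) - l%:R) k
               = (\prod_(i < k) c i)%:~R / ((2 ^ k * k`!)%N)%:R.
  apply: binq_half_int => i; rewrite /c rmorphN /= -[(_%:Z)%:~R]/(_%:R : rat).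
  by rewrite !natrD; field.
have binq_hi : binq ((P%:R - 1) / 2 - l%:R) k
               = (\prod_(i < k) (P%:Z + c i))%:~R / ((2 ^ k * k`!)%N)%:R.
  apply: (binq_half_int _ (fun i => P%:Z + c i)) => i.
  rewrite /c rmorphD rmorphN /= -[((_ + _)%N)%:Z%:~R]/(((_ + _)%N)%:R : rat).
  by rewrite -[(P%:Z)%:~R]/(P%:R : rat) !natrD; field.
exists (- m); rewrite binq_lo binq_hi prod_shift -mulrBl; congr (_ * _).
by rewrite -rmorphB /=; congr (_%:~R); ring.
Qed.

(* For p odd, 2^k is a p-adic unit, so v_p(p^s m / (2^k k!)) = s + v_p(m) - v_p(k!). *)
Lemma padic_val_pow_frac (p s k : nat) (m : int) : prime p -> p != 2%N -> m != 0 ->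
  padic_val p (((p ^ s)%N%:Z * m)%:~R / ((2 ^ k * k`!)%N)%:R)
  = (s + logn p `|m|)%:Z - (logn p k`!)%:Z.
Proof.
move=> p_pr p_neq2 m_neq0; have p_gt0 := prime_gt0 p_pr.
have ps_gt0 : (0 < p ^ s)%N by rewrite expn_gt0 p_gt0.
rewrite padic_val_frac; last by rewrite muln_gt0 expn_gt0 fact_gt0.
  rewrite abszM absz_nat !lognM ?absz_gt0 ?ps_gt0 ?expn_gt0 ?fact_gt0 //.
  by rewrite pfactorK // lognX (@logn_prime p 2) // (negbTE p_neq2) muln0 add0n.
by rewrite mulf_neq0 // -lt0n.
Qed.

(* A lower bound r on the valuation of q gives |q|_p <= p^(-r);
   the bound is only needed when q != 0, since |0|_p = 0. *)
Lemma padic_norm_le (R : realType) (p : nat) (q : rat) (r : R) : (0 < p)%N ->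
  (q != 0 -> r <= (padic_val p q)%:~R) -> padic_norm R p q <= (p%:R : R) `^ (- r).
Proof.
move=> p_gt0 val_ge; rewrite /padic_norm; case: eqP => [_|/eqP q_neq0].
  exact: powR_ge0.
rewrite -powR_intmul ?ler0n //; apply: ler_powR; first by rewrite ler1n.
by rewrite rmorphN /= lerN2; exact: val_ge.
Qed.

Theorem lemma10p3 (R : realType) (p l1 l2 : nat) :
  prime p -> odd p ->
  exists s0 : nat, forall (s : nat) (a : int),
    (s0 <= s)%N ->
    0 <= l2%:Z + a ->
    ((l2%:Z + a)%:~R : rat) <= (((p ^ s)%N)%:R - 1) / 2 - l1%:R ->
    let k := absz (l2%:Z + a) in
    let d : R := l1%:R + l2%:R - 1 / 2 in
    padic_norm R p (binq (- (1 / 2) - l1%:R) k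
                    - binq ((((p ^ s)%N)%:R - 1) / 2 - l1%:R) k)
      <= (p%:R : R) `^ (- (s%:R - d - a%:~R)).
Proof.
move=> p_pr p_odd; exists 0%N => s a _ ka_ge0 _; cbv zeta.
set k := absz (l2%:Z + a); have k_def : k%:Z = l2%:Z + a by rewrite /k gez0_abs.
apply: padic_norm_le (prime_gt0 p_pr) _ => diff_neq0.
have k_gt0 : (0 < k)%N.
  by move: diff_neq0; rewrite lt0n; apply: contra => /eqP ->; rewrite /binq !big_ord0 subrr.
have [m diff_eq] := binq_half_shift (p ^ s) l1 k.
have m_neq0 : m != 0.
  by move: diff_neq0; rewrite diff_eq; apply: contra => /eqP ->; rewrite mulr0 mul0r.
have p_neq2 : p != 2%N by apply: contraTneq p_odd => ->.
rewrite diff_eq padic_val_pow_frac //.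
have fact_lt := logn_fact_lt p k p_pr p_odd k_gt0.
set L := logn p `|m|; set F := logn p k`!.
have val_ge : s%:Z - k%:Z + 1 <= (s + L)%:Z - F%:Z by lia.
apply: le_trans (_ : (s%:Z - k%:Z + 1)%:~R <= _); last by rewrite ler_int.
have -> : a = k%:Z - l2%:Z by lia.
rewrite !intrD !intrN /= !pmulrn; have := ler0n R l1; lra.
Qed.
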